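(* Let $A:\mathbb{R}^n\rightrightarrows\mathbb{R}^n$ be a maximally monotone symmetric linear relation, $a,b\in\mathbb{R}^n$, $c\in\mathbb{R}$, $r>0$, and define the generalized linear-quadratic function $$f(x)=\frac r2\langle x-a,A(x-a)\rangle+\langle b,x\rangle+c$$ (with $f(x)=\infty$ when $x-a\notin\operatorname{dom}A$). Then for every $x\in\mathbb{R}^n$, $$e_rf(x)=r\,q_{(\operatorname{Id}+A^{-1})^{-1}}\Big(x-a-\frac br\Big)+\langle b,x\rangle-\frac1r q(b)+c.$$
   Context: A linear relation is an operator $A:\mathbb{R}^n\rightrightarrows\mathbb{R}^n$ whose graph $\{(x,x^* ):x^*\in Ax\}$ is a linear subspace of $\mathbb{R}^n\times\mathbb{R}^n$. $A$ is monotone if $\langle x^*-y^*,x-y\rangle\ge0$ for all $(x,x^* ),(y,y^* )$ in its graph, maximally monotone if no monotone operator has a strictly larger graph, and symmetric if $\langle x,y^*\rangle=\langle y,x^*\rangle$ for all $(x,x^* ),(y,y^* )\in\operatorname{gra}A$. $A^{-1}$ is the set-valued inverse. For a monotone linear relation $B$, $q_B(x)=\frac12\langle x,Bx\rangle$ if $x\in\operatorname{dom}B$ (single-valued) and $\infty$ otherwise. $q=\frac12\|\cdot\|^2$. The Moreau envelope is $e_rf(x)=\inf_y\{f(y)+\frac r2\|y-x\|^2\}$. *)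

From mathcomp Require Import all_boot all_order all_algebra.
From mathcomp Require Import all_classical all_reals ereal.
Set Implicit Arguments. Unset Strict Implicit. Unset Printing Implicit Defensive.
Import Order.TTheory GRing.Theory Num.Theory.
Local Open Scope classical_set_scope.
Local Open Scope ring_scope.

Section Defs.
Variables (R : realType) (n : nat).
Local Notation V := 'rV[R]_n.

Definition dot (u v : V) : R := \sum_(i < n) u 0 i * v 0 i.

Definition qn (v : V) : R := 2^-1 * dot v v.

(* set-valued operators on R^n, given by their graph: rel x x* means x* \in A x *)
Definition relation := V -> V -> Prop.

Definition linear_relation (A : relation) : Prop :=
  A 0 0 /\
  (forall x xs y ys, A x xs -> A y ys -> A (x + y) (xs + ys)) /\
  (forall (k : R) x xs, A x xs -> A (k *: x) (k *: xs)).

Definition mono_rel (A : relation) : Prop :=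
  forall x xs y ys, A x xs -> A y ys -> 0 <= dot (xs - ys) (x - y).

Definition max_mono_rel (A : relation) : Prop :=
  mono_rel A /\
  forall B : relation, mono_rel B -> (forall x xs, A x xs -> B x xs) ->
    forall x xs, B x xs -> A x xs.

Definition symmetric_rel (A : relation) : Prop :=
  forall x xs y ys, A x xs -> A y ys -> dot x ys = dot y xs.

Definition dom (A : relation) : set V := [set x | exists xs, A x xs].

Definition rinv (A : relation) : relation := fun x xs => A xs x.

Definition id_plus (A : relation) : relation :=
  fun x y => exists z, A x z /\ y = x + z.

(* q_B(x) = 1/2 <x, Bx> if x \in dom B (independent of the chosen element of
   Bx for a mono_rel linear relation), +oo otherwise *)
Definition qB (B : relation) (x : V) : \bar R :=
  if pselect (dom B x) then (2^-1 * dot x (xget 0 [set y | B x y]))%:E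
  else +oo%E.

Definition moreau_env (r : R) (f : V -> \bar R) (x : V) : \bar R :=
  ereal_inf [set (f y + (r / 2 * dot (y - x) (y - x))%:E)%E | y in [set: V]].

End Defs.

From mathcomp Require Import all_boot all_order all_algebra.
From mathcomp Require Import all_classical all_reals ereal.
From mathcomp Require Import lra ring.
Import Order.TTheory GRing.Theory Num.Theory.
Local Open Scope classical_set_scope.
Local Open Scope ring_scope.

(* Minty's theorem for the linear relation A, proved by adding to its graph a
   pair (w, w) with w orthogonal to the range of Id + A, splits
   u := x - a - r^-1 b as u = z + v with v in A z, i.e. v in (Id + A^-1)^-1 u.
   Completing the square in b, the Moreau objective at y = p + a, ps in A p,
   is (r/2) (<p, ps> + |p - u|^2) plus the constant <b, x> - q(b)/r + c, and
   symmetry of A gives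
     <p, ps> + |p - u|^2 = <u, v> + <p - z, ps - v> + |p - z|^2 >= <u, v>,
   with equality at p = z.  The infimum is thus attained at y = z + a, where
   it equals r q_{(Id + A^-1)^-1}(u) + <b, x> - q(b)/r + c. *)

Section RowSpace.
Context {F : fieldType} {n : nat}.
Implicit Types (S : set 'rV[F]_n) (u : 'rV[F]_n).

Definition linear_subspace S :=
  [/\ S 0, forall u v, S u -> S v -> S (u + v) & forall k u, S u -> S (k *: u)].

Definition rows_in S {m} (M : 'M[F]_(m, n)) := forall i, S (row i M).

Lemma subspace_rowspace S m (M : 'M_(m, n)) u :
  linear_subspace S -> rows_in S M -> (u <= M)%MS -> S u.
Proof.
case=> S0 SD SZ SM /submxP[D ->]; rewrite mulmx_sum_row.
by apply: (big_ind S S0 SD) => i _; apply: SZ.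
Qed.

Lemma rows_in_col_mx S m (M : 'M_(m, n)) u :
  rows_in S M -> S u -> rows_in S (col_mx M u).
Proof.
move=> SM Su i; rewrite -(splitK i); case: (fintype.split i) => j /=.
  by rewrite rowKu.
by rewrite rowKd ord1 row_id.
Qed.

Lemma subspace_spanned S : linear_subspace S ->
  exists m (M : 'M_(m, n)), forall u, S u <-> (u <= M)%MS.
Proof.
move=> subS; apply: contrapT => nospan.
suff /(_ n.+1) [m [M [_ /leq_trans/(_ (rank_leq_col M))]]] :
    forall k, exists m (M : 'M_(m, n)), rows_in S M /\ (k <= \rank M)%N.
  by rewrite ltnn.
elim=> [|k [m [M [SM rkM]]]]; first by exists 0%N, 0; split=> [[]|].
have [s [Ss sNM]] : exists s, S s /\ ~~ (s <= M)%MS.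
  apply: contrapT => allM; apply: nospan; exists m, M => u.
  split; last exact: subspace_rowspace.
  by move=> Su; apply: contrapT => /negP uNM; apply: allM; exists u.
exists (m + 1)%N, (col_mx M s); split; first exact: rows_in_col_mx.
apply: leq_ltn_trans rkM _; apply: rank_ltmx.
by rewrite ltmxE -addsmxE addsmxSl /= col_mx_sub negb_and sNM orbT.
Qed.
End RowSpace.

Section LinearRelations.
Context {R : realType} {n : nat}.
Local Set Implicit Arguments. Local Unset Strict Implicit.
Implicit Types (A B : relation R n) (a b p ps u v w x y z : 'rV[R]_n).

Lemma dotC u v : dot u v = dot v u.
Proof. by apply: eq_bigr => i _; rewrite mulrC. Qed.

Lemma dotDl u v w : dot (u + v) w = dot u w + dot v w.
Proof. by rewrite /dot -big_split; apply: eq_bigr => i _; rewrite mxE mulrDl. Qed.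

Lemma dotZl (k : R) u w : dot (k *: u) w = k * dot u w.
Proof. by rewrite /dot mulr_sumr; apply: eq_bigr => i _; rewrite mxE mulrA. Qed.

Lemma dotNl u w : dot (- u) w = - dot u w.
Proof. by rewrite -scaleN1r dotZl mulN1r. Qed.

Lemma dotBl u v w : dot (u - v) w = dot u w - dot v w.
Proof. by rewrite dotDl dotNl. Qed.

Lemma dotDr u v w : dot w (u + v) = dot w u + dot w v.
Proof. by rewrite dotC dotDl !(dotC w). Qed.

Lemma dotZr (k : R) u w : dot w (k *: u) = k * dot w u.
Proof. by rewrite dotC dotZl dotC. Qed.

Lemma dotNr u w : dot w (- u) = - dot w u.
Proof. by rewrite dotC dotNl dotC. Qed.

Lemma dotBr u v w : dot w (u - v) = dot w u - dot w v.
Proof. by rewrite dotDr dotNr. Qed.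

Lemma dot0l u : dot 0 u = 0.
Proof. by rewrite -(scale0r 0) dotZl mul0r. Qed.

Lemma dot_ge0 u : 0 <= dot u u.
Proof. by apply: sumr_ge0 => i _; rewrite -expr2 sqr_ge0. Qed.

Lemma dot_eq0 u : (dot u u == 0) = (u == 0).
Proof.
apply/idP/eqP => [|->]; last by rewrite dot0l.
rewrite psumr_eq0 => [/allP u0|i _]; last by rewrite -expr2 sqr_ge0.
apply/rowP => i; rewrite mxE.
by have /implyP/(_ isT) := u0 i (mem_index_enum i); rewrite mulf_eq0 orbb => /eqP.
Qed.

Lemma dot_mx u v : dot u v = (u *m v^T) 0 0.
Proof. by rewrite mxE; apply: eq_bigr => i _; rewrite mxE. Qed.

Lemma dot_symmetric_expansion p ps z v : dot ps z = dot p v ->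
  dot p ps + dot (p - (z + v)) (p - (z + v)) =
  dot (z + v) v + (dot (p - z) (ps - v) + dot (p - z) (p - z)).
Proof.
move=> sym; rewrite !(dotDl, dotDr, dotNl, dotNr).
rewrite (dotC z p) (dotC v p) (dotC v z) (dotC z ps) sym; lra.
Qed.

Lemma subspace_orthogonal (S : set 'rV[R]_n) :
  linear_subspace S -> ~ (forall u, S u) ->
  exists2 w, w != 0 & forall s, S s -> dot w s = 0.
Proof.
move=> /subspace_spanned[m [M SM]] notT.
have [Mfull|MNfull] := boolP (row_full M).
  by case: notT => u; apply/SM/submx_full.
have /rowV0Pn[w /sub_kermxP wM w0] : kermx M^T != 0.
  rewrite -mxrank_eq0 mxrank_ker mxrank_tr subn_eq0 -ltnNge.
  by rewrite ltn_neqAle rank_leq_col andbT.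
exists w => // s /SM/submxP[D ->].
by rewrite dot_mx trmx_mul mulmxA wM mul0mx mxE.
Qed.

Lemma linear_relation_range A :
  linear_relation A -> linear_subspace [set y | exists x, A x y].
Proof.
case=> A0 [AD AZ]; split; first by exists 0.
  by move=> y1 y2 [x1 h1] [x2 h2]; exists (x1 + x2); apply: AD.
by move=> k y [x h]; exists (k *: x); apply: AZ.
Qed.

Lemma linear_relation_rinv A : linear_relation A -> linear_relation (rinv A).
Proof.
case=> A0 [AD AZ]; split=> //.
by split=> [x xs y ys hx hy|k x xs hx]; [apply: AD|apply: AZ].
Qed.

Lemma linear_relation_id_plus A : linear_relation A -> linear_relation (id_plus A).
Proof.
case=> A0 [AD AZ]; split; first by exists 0; rewrite addr0.
split=> [x _ y _ [xs [hx ->]] [ys [hy ->]]|k x _ [xs [hx ->]]].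
  by exists (xs + ys); rewrite addrACA; split=> //; apply: AD.
by exists (k *: xs); rewrite scalerDr; split=> //; apply: AZ.
Qed.

Lemma mono_rel_rinv A : mono_rel A -> mono_rel (rinv A).
Proof. by move=> monoA x xs y ys hx hy; rewrite dotC; apply: monoA. Qed.

Lemma mono_rel_id_plus A : mono_rel A -> mono_rel (id_plus A).
Proof.
move=> monoA x _ y _ [xs [hx ->]] [ys [hy ->]].
rewrite opprD addrACA dotDl; apply: addr_ge0; first exact: dot_ge0.
exact: monoA.
Qed.

Lemma mono_linear_dot_ge0 A x xs :
  linear_relation A -> mono_rel A -> A x xs -> 0 <= dot xs x.
Proof. by case=> A0 _ monoA hx; have := monoA _ _ _ _ hx A0; rewrite !subr0. Qed.

(* Monotonicity against the whole line [A 0 (t *: d)] forces [dot d x = 0]. *)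
Lemma mono_linear_orth A d x xs :
  linear_relation A -> mono_rel A -> A 0 d -> A x xs -> dot d x = 0.
Proof.
case=> _ [_ AZ] monoA hd hx.
have le_te t : t * dot d x <= dot xs x.
  have := monoA _ _ _ _ (AZ t _ _ hd) hx.
  by rewrite scaler0 sub0r dotNr dotBl dotZl; lra.
apply/eqP; apply: contraT => dx_neq0.
by have := le_te ((dot xs x + 1) / dot d x); rewrite divfK //; lra.
Qed.

Lemma qB_eq B x xs :
  linear_relation B -> mono_rel B -> B x xs -> qB B x = (2^-1 * dot x xs)%:E.
Proof.
move=> linB monoB hx; rewrite /qB; case: pselect => [domx|]; last by case; exists xs.
have hy : B x (xget 0 [set y | B x y]) by apply: xgetPex.
have [_ [BD BZ]] := linB.
have hd : B 0 (xget 0 [set y | B x y] - xs).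
  by have := BD _ _ _ _ hy (BZ (-1) _ _ hx); rewrite !scaleN1r subrr.
have := mono_linear_orth linB monoB hd hx.
by rewrite dotBl !(dotC _ x) => /eqP; rewrite subr_eq0 => /eqP ->.
Qed.

Lemma max_mono_rel_mem A w ws : max_mono_rel A ->
  (forall x xs, A x xs -> 0 <= dot (xs - ws) (x - w)) -> A w ws.
Proof.
move=> [monoA maxA] hw.
pose B x xs := A x xs \/ x = w /\ xs = ws.
apply: (maxA B) => [x xs y ys [hx|[-> ->]] [hy|[-> ->]]||]; last by right.
- exact: monoA.
- exact: hw.
- by rewrite -[ws - _]opprB -[w - _]opprB dotNl dotNr opprK; apply: hw.
- by rewrite subrr dot0l.
- by move=> x xs; left.
Qed.

Lemma id_plus_surjective A : linear_relation A -> max_mono_rel A ->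
  forall u, exists x, id_plus A x u.
Proof.
move=> linA maxA; apply: contrapT => /existsNP[u0 /forallNP Nu0].
have rangeS := linear_relation_range (linear_relation_id_plus linA).
have [w w_neq0 w_orth] :
    exists2 w, w != 0 & forall s, (exists x, id_plus A x s) -> dot w s = 0.
  by apply: subspace_orthogonal rangeS _ => /(_ u0)[x]; apply: Nu0.
have orth x xs : A x xs -> dot w x + dot w xs = 0.
  by move=> hx; rewrite -dotDr; apply: w_orth; exists x, xs.
have Aww : A w w.
  apply: max_mono_rel_mem => // x xs hx.
  have := mono_linear_dot_ge0 linA maxA.1 hx; have := orth _ _ hx.
  have := dot_ge0 w; rewrite !(dotBl, dotBr) (dotC xs w); lra.
have := orth _ _ Aww; rewrite -mulr2n => /eqP.
by rewrite mulrn_eq0 dot_eq0 (negPf w_neq0).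
Qed.

Lemma mono_symmetric_envelope_lb A z v p ps : mono_rel A -> symmetric_rel A ->
  A z v -> A p ps -> dot (z + v) v <= dot p ps + dot (p - (z + v)) (p - (z + v)).
Proof.
move=> monoA symA Azv Apps.
have sym : dot ps z = dot p v by rewrite dotC (symA _ _ _ _ Apps Azv).
rewrite (dot_symmetric_expansion sym) lerDl addr_ge0 ?dot_ge0 //.
by rewrite dotC; apply: monoA.
Qed.

Lemma moreau_env_attained (r : R) (f : 'rV[R]_n -> \bar R) x y0 :
  (forall y, (f y0 + (r / 2 * dot (y0 - x) (y0 - x))%:E
              <= f y + (r / 2 * dot (y - x) (y - x))%:E)%E) ->
  moreau_env r f x = (f y0 + (r / 2 * dot (y0 - x) (y0 - x))%:E)%E.
Proof.
move=> y0_min; apply/le_anti/andP; split; first by apply: ereal_inf_lbound; exists y0.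
by apply/ereal_infP => _ [y _ <-]; apply: y0_min.
Qed.

Lemma dot_complete_square (r : R) b x y : r != 0 ->
  dot b y + r / 2 * dot (y - x) (y - x) =
  r / 2 * dot (y - x + r^-1 *: b) (y - x + r^-1 *: b) + (dot b x - r^-1 * qn b).
Proof.
move=> r0; rewrite /qn !(dotDl, dotDr, dotNl, dotNr, dotZl, dotZr).
by rewrite (dotC x y) (dotC y b) (dotC x b); field.
Qed.

Lemma moreau_objective_shift (r c : R) a b x p ps : r != 0 ->
  r * (2^-1 * dot p ps) + (dot b (p + a) + c) + r / 2 * dot (p + a - x) (p + a - x) =
  r / 2 * (dot p ps + dot (p - (x - a - r^-1 *: b)) (p - (x - a - r^-1 *: b)))
  + (dot b x - r^-1 * qn b + c).
Proof.
move=> r0; have := dot_complete_square b x (p + a) r0.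
have -> : p + a - x + r^-1 *: b = p - (x - a - r^-1 *: b).
  by rewrite !opprD !opprK !addrA (addrAC p a).
rewrite mulrA mulrDr; lra.
Qed.

End LinearRelations.

Theorem theorem4p46 (R : realType) (n : nat) (A : relation R n)
  (a b : 'rV[R]_n) (c r : R) :
  linear_relation A -> max_mono_rel A -> symmetric_rel A -> 0 < r ->
  let f : 'rV[R]_n -> \bar R :=
    fun x => (r%:E * qB A (x - a) + (dot b x + c)%:E)%E in
  forall x : 'rV[R]_n,
    moreau_env r f x =
    (r%:E * qB (rinv (id_plus (rinv A))) (x - a - r^-1 *: b)
       + (dot b x - r^-1 * qn b + c)%:E)%E.
Proof.
move=> linA maxA symA r_gt0 f x; have r_neq0 : r != 0 by rewrite gt_eqF.
set u := x - a - r^-1 *: b.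
have [z [v [Azv uE]]] := id_plus_surjective linA maxA u.
have linB := linear_relation_rinv (linear_relation_id_plus (linear_relation_rinv linA)).
have monoB := mono_rel_rinv (mono_rel_id_plus (mono_rel_rinv maxA.1)).
have Buv : rinv (id_plus (rinv A)) u v by exists z; rewrite uE addrC.
have objective p ps : A p ps ->
    (f (p + a)%R + (r / 2 * dot (p + a - x) (p + a - x))%:E)%E =
    (r / 2 * (dot p ps + dot (p - u) (p - u)) + (dot b x - r^-1 * qn b + c))%:E.
  move=> Apps; rewrite /f addrK (qB_eq linA maxA.1 Apps) -EFinM -!EFinD.
  by rewrite moreau_objective_shift.
have objective_z : dot z v + dot (z - u) (z - u) = dot u v.
  by rewrite uE (dot_symmetric_expansion (dotC v z)) subrr !dot0l !addr0.
rewrite (qB_eq linB monoB Buv) (moreau_env_attained (y0 := (z + a)%R)) => [|y].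
  by rewrite (objective _ _ Azv) objective_z -mulrA -EFinM -EFinD.
rewrite (objective _ _ Azv) objective_z -(subrK a y).
case: (pselect (dom A (y - a))) => [[ps Aps]|ndom].
  rewrite (objective _ _ Aps) lee_fin lerD2r ler_pM2l ?divr_gt0 // uE.
  exact: mono_symmetric_envelope_lb maxA.1 symA Azv Aps.
rewrite /f addrK; have -> : qB A (y - a) = +oo%E by rewrite /qB; case: pselect.
by rewrite gt0_muley ?lte_fin // !addye // leey.
Qed.
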